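(* Let $(w_k)_{k\ge0}$ and $(z_k)_{k\ge0}$ be sequences of real numbers, and let $J$ be the infinite matrix \[ J=\begin{bmatrix} w_0&z_0&&&&&\\ w_1&z_1&1&&&&\\ w_2&z_2&0&1&&&\\ w_3&z_3&0&0&1&&\\ w_4&z_4&0&0&0&1&\\ \vdots&\vdots&&&&&\ddots \end{bmatrix}, \] i.e. $J_{i,0}=w_i$, $J_{i,1}=z_i$ for $i\ge0$, $J_{i,i+1}=1$ for $i\ge1$, and all other entries are $0$. Then $J$ is totally positive if and only if both of the following hold: (1) $w_k=z_k=0$ for all $k\ge2$, and $w_0,w_1,z_0,z_1\ge0$; (2) $w_0z_1-w_1z_0\ge0$.
   Context: An infinite matrix is totally positive (TP) if all its minors (of all orders) are nonnegative. *)

From mathcomp Require Import all_boot all_order all_algebra.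
From mathcomp Require Import reals.
Set Implicit Arguments. Unset Strict Implicit. Unset Printing Implicit Defensive.
Import Order.TTheory GRing.Theory Num.Theory.
Local Open Scope ring_scope.

Definition infmx (R : Type) := nat -> nat -> R.

Definition strict_incr (k : nat) (s : 'I_k -> nat) : Prop :=
  forall i j : 'I_k, (i < j)%N -> (s i < s j)%N.

Definition minor (R : comPzRingType) (A : infmx R) (k : nat)
  (r c : 'I_k -> nat) : R := \det (\matrix_(i < k, j < k) A (r i) (c j)).

Definition totally_positive (R : realFieldType) (A : infmx R) : Prop :=
  forall (k : nat) (r c : 'I_k -> nat),
    strict_incr r -> strict_incr c -> 0 <= minor A r c.

Definition Jmx (R : realFieldType) (w z : nat -> R) : infmx R :=
  fun i j => if j == 0%N then w i
             else if j == 1%N then z i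
             else if (1 <= i)%N && (j == i.+1) then 1 else 0.

From mathcomp Require Import all_boot all_order all_algebra.
From mathcomp Require Import reals.
From mathcomp Require Import zify.
Set Implicit Arguments. Unset Strict Implicit. Unset Printing Implicit Defensive.
Import Order.TTheory GRing.Theory Num.Theory.
Local Open Scope ring_scope.

(* Necessity comes from the minors of order 1 and 2: the minor with rows
   k-1, k and columns 0, k+1 (resp. 1, k+1) equals -w_k (resp. -z_k) for
   k >= 2.  For sufficiency, once w_k = z_k = 0 for k >= 2, every row k >= 2
   of J is the unit row vector e_(k+1), while a column j >= 2 is e_(j-1).
   Hence a minor whose last row index is at least 2 either has a zero last
   row or column, or equals the minor obtained by deleting its last row and
   column.  This reduces everything to minors drawn from rows 0 and 1, which
   are products of nonnegative entries or w_0 z_1 - w_1 z_0. *)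

Lemma det_mx2 (R : comPzRingType) (A : 'M[R]_2) :
  \det A = A 0 0 * A 1 1 - A 0 1 * A 1 0.
Proof.
rewrite (expand_det_row A 0) !big_ord_recr big_ord0 /= add0r.
rewrite /cofactor !det_mx11 !mxE /= expr0 expr1 mul1r mulN1r mulrN.
have -> : widen_ord (leqnSn 1) ord_max = 0 :> 'I_2 by apply/val_inj.
have -> : lift 0 0 = 1 :> 'I_2 by apply/val_inj.
have -> : lift ord_max 0 = 0 :> 'I_2 by apply/val_inj.
by have -> : ord_max = 1 :> 'I_2 by apply/val_inj.
Qed.

Section StrictIncr.

Lemma strict_incr_ge_ord k (s : 'I_k -> nat) :
  strict_incr s -> forall i : 'I_k, (i <= s i)%N.
Proof.
move=> s_incr [n n_lt] /=; elim: n n_lt => // n IH n1_lt.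
have n_lt := ltnW n1_lt; have := IH n_lt.
have : (s (Ordinal n_lt) < s (Ordinal n1_lt))%N by apply: s_incr.
lia.
Qed.

Variables (k : nat) (s : 'I_k.+1 -> nat).
Hypothesis s_incr : strict_incr s.

Lemma strict_incr_lt_last i : i != ord_max -> (s i < s ord_max)%N.
Proof.
move=> i_ne; apply: s_incr; move: i_ne (ltn_ord i).
by rewrite -(inj_eq val_inj) /=; lia.
Qed.

Lemma strict_incr_le_last i : (s i <= s ord_max)%N.
Proof.
by have [->|/strict_incr_lt_last/ltnW] := eqVneq i ord_max.
Qed.

Lemma strict_incr_lift_max : strict_incr (fun i : 'I_k => s (lift ord_max i)).
Proof. by move=> i j ij; apply: s_incr; rewrite !lift_max. Qed.

End StrictIncr.

Definition idx1 (a : nat) : 'I_1 -> nat := fun=> a.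
Definition idx2 (a b : nat) : 'I_2 -> nat := fun i => if val i == 0%N then a else b.

Lemma strict_incr_idx1 a : strict_incr (idx1 a).
Proof. by move=> [[|i] ?] [[|j] ?]. Qed.

Lemma strict_incr_idx2 a b : (a < b)%N -> strict_incr (idx2 a b).
Proof. by move=> ab [[|[|i]] ?] [[|[|j]] ?]. Qed.

Section Minors.
Variable R : comPzRingType.
Implicit Type A : infmx R.

Lemma minor1E A (r c : 'I_1 -> nat) : minor A r c = A (r 0) (c 0).
Proof. by rewrite /minor det_mx11 mxE. Qed.

Lemma minor2E A (r c : 'I_2 -> nat) :
  minor A r c = A (r 0) (c 0) * A (r 1) (c 1) - A (r 0) (c 1) * A (r 1) (c 0).
Proof. by rewrite /minor det_mx2 !mxE. Qed.

Variables (k : nat) (r c : 'I_k.+1 -> nat).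

Lemma minor_last_row0 A :
  (forall j, A (r ord_max) (c j) = 0) -> minor A r c = 0.
Proof.
move=> row0; rewrite /minor (expand_det_row _ ord_max) big1 // => j _.
by rewrite mxE row0 mul0r.
Qed.

Lemma minor_last_col0 A :
  (forall i, A (r i) (c ord_max) = 0) -> minor A r c = 0.
Proof.
move=> col0; rewrite /minor (expand_det_col _ ord_max) big1 // => i _.
by rewrite mxE col0 mul0r.
Qed.

Lemma minor_last_row_unit A :
  (forall j, A (r ord_max) (c j) = if j == ord_max then 1 else 0) ->
  minor A r c = minor A (fun i => r (lift ord_max i)) (fun j => c (lift ord_max j)).
Proof.
move=> row_unit; rewrite /minor (expand_det_row _ ord_max) (bigD1 ord_max) //=.
rewrite big1 => [|j /negPf j_ne]; last by rewrite mxE row_unit j_ne mul0r.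
rewrite addr0 mxE row_unit eqxx mul1r /cofactor -signr_odd addnn odd_double.
by rewrite expr0 mul1r; congr (\det _); apply/matrixP => i j; rewrite !mxE.
Qed.

End Minors.

Section TotallyPositive.
Variables (R : realFieldType) (A : infmx R).
Hypothesis A_tp : totally_positive A.

Lemma tp_entry_ge0 a b : 0 <= A a b.
Proof. by rewrite -(minor1E A (idx1 a)); apply: A_tp; apply: strict_incr_idx1. Qed.

Lemma tp_minor2_ge0 a b c d : (a < b)%N -> (c < d)%N ->
  0 <= A a c * A b d - A a d * A b c.
Proof.
move=> ab cd; rewrite -(minor2E A (idx2 a b) (idx2 c d)).
by apply: A_tp; apply: strict_incr_idx2.
Qed.

End TotallyPositive.

Section Jmx.
Variables (R : realFieldType) (w z : nat -> R).
Local Notation J := (Jmx w z).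

Lemma Jmx_col_ge2 i j :
  (2 <= j)%N -> J i j = if (1 <= i)%N && (j == i.+1) then 1 else 0.
Proof. by rewrite /Jmx; case: j => [|[|j]]. Qed.

Lemma Jmx_tp_vanish : totally_positive J ->
  forall k, (2 <= k)%N -> w k = 0 /\ z k = 0.
Proof.
move=> J_tp [|[|k]] // _.
have J_k1k2 : J k.+1 k.+2 = 1 by rewrite Jmx_col_ge2 // eqxx.
have J_k2k2 : J k.+2 k.+2 = 0 by rewrite Jmx_col_ge2 // (ltn_eqF (ltnSn _)) andbF.
have w_le0 := tp_minor2_ge0 J_tp (ltnSn k.+1) (isT : (0 < k.+2)%N).
have z_le0 := tp_minor2_ge0 J_tp (ltnSn k.+1) (isT : (1 < k.+2)%N).
move: w_le0 z_le0 (tp_entry_ge0 J_tp k.+2 0%N) (tp_entry_ge0 J_tp k.+2 1%N).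
rewrite J_k1k2 J_k2k2 !mulr0 !mul1r !sub0r !oppr_ge0 /Jmx /= => w_le0 z_le0 w_ge0 z_ge0.
by split; apply/eqP; rewrite eq_le ?w_le0 ?z_le0.
Qed.

Hypothesis w_z_vanish : forall k, (2 <= k)%N -> w k = 0 /\ z k = 0.
Hypotheses (w0_ge0 : 0 <= w 0%N) (w1_ge0 : 0 <= w 1%N).
Hypotheses (z0_ge0 : 0 <= z 0%N) (z1_ge0 : 0 <= z 1%N).
Hypothesis det01_ge0 : 0 <= w 0%N * z 1%N - w 1%N * z 0%N.

Lemma Jmx_row_ge2 i j : (2 <= i)%N -> J i j = if j == i.+1 then 1 else 0.
Proof.
move=> i_ge2; have [wi0 zi0] := w_z_vanish i_ge2.
rewrite /Jmx; case: j => [|[|j]] /=; rewrite ?wi0 ?zi0 //.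
- by case: i i_ge2 {wi0 zi0}.
- by rewrite (leq_trans _ i_ge2).
Qed.

Lemma Jmx_ge0 i j : 0 <= J i j.
Proof.
have [wi_ge0 zi_ge0] : 0 <= w i /\ 0 <= z i.
  case: i => [|[|i]] //; have [-> ->] := w_z_vanish (isT : (2 <= i.+2)%N).
  by rewrite lexx.
by rewrite /Jmx; do 3 case: ifP => _ //.
Qed.

Lemma Jmx_minor_rows01_ge0 c0 c1 : (c0 < c1)%N ->
  0 <= J 0%N c0 * J 1%N c1 - J 0%N c1 * J 1%N c0.
Proof.
move=> c01; have [c1_ge2|c1_le1] := leqP 2 c1.
  by rewrite [J 0%N c1]Jmx_col_ge2 // mul0r subr0 mulr_ge0 ?Jmx_ge0.
have [-> ->] : c0 = 0%N /\ c1 = 1%N by lia.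
by rewrite /Jmx /= [z 0%N * _]mulrC.
Qed.

Section LastRow.
Variables (k : nat) (r c : 'I_k.+1 -> nat).
Hypotheses (r_incr : strict_incr r) (c_incr : strict_incr c).

Lemma minor_Jmx_last_row : (2 <= r ord_max)%N ->
  minor J r c = if c ord_max == (r ord_max).+1
    then minor J (fun i => r (lift ord_max i)) (fun j => c (lift ord_max j))
    else 0.
Proof.
move=> r_ge2; have [c_eq|c_ne] := eqVneq (c ord_max) (r ord_max).+1.
  apply: minor_last_row_unit => j; rewrite Jmx_row_ge2 // -c_eq.
  have [->|j_ne] := eqVneq j ord_max; first by rewrite eqxx.
  by rewrite ltn_eqF // strict_incr_lt_last.
have [c_lt|c_gt] := ltnP (c ord_max) (r ord_max).+1.
  apply: minor_last_row0 => j; rewrite Jmx_row_ge2 // ltn_eqF //.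
  exact: leq_ltn_trans (strict_incr_le_last c_incr j) c_lt.
apply: minor_last_col0 => i; rewrite Jmx_col_ge2; last by lia.
have := strict_incr_le_last r_incr i.
by case: eqP => [|_]; rewrite ?andbF //; lia.
Qed.

End LastRow.

Lemma Jmx_tp : totally_positive J.
Proof.
move=> k; elim: k => [|k IH] r c r_incr c_incr.
  by rewrite /minor det_mx00 ler01.
have [r_ge2|r_le1] := leqP 2 (r ord_max).
  rewrite minor_Jmx_last_row //; case: ifP => // _.
  by apply: IH; apply: strict_incr_lift_max.
have k_le1 : (k <= 1)%N by have := strict_incr_ge_ord r_incr ord_max; rewrite /=; lia.
case: k k_le1 IH r c r_incr c_incr r_le1 => [|[|k]] // _ _ r c r_incr c_incr r_le1.
  by rewrite minor1E Jmx_ge0.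
have r01 : (r 0%R < r 1%R)%N by apply: r_incr.
have r1 : r 1%R = 1%N by have := strict_incr_le_last r_incr 1; lia.
have r0 : r 0%R = 0%N by lia.
by rewrite minor2E r0 r1 Jmx_minor_rows01_ge0 //; apply: c_incr.
Qed.

End Jmx.

Theorem theorem3p4 (R : realType) (w z : nat -> R) :
  totally_positive (Jmx w z) <->
  ((forall k : nat, (2 <= k)%N -> w k = 0 /\ z k = 0) /\
     0 <= w 0%N /\ 0 <= w 1%N /\ 0 <= z 0%N /\ 0 <= z 1%N) /\
  0 <= w 0%N * z 1%N - w 1%N * z 0%N.
Proof.
split=> [J_tp|[[vanish [w0 [w1 [z0 z1]]]] det01]]; last exact: Jmx_tp.
move: (tp_minor2_ge0 J_tp (ltn0Sn 0) (ltn0Sn 0)) (tp_entry_ge0 J_tp 0%N 0%N)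
  (tp_entry_ge0 J_tp 1%N 0%N) (tp_entry_ge0 J_tp 0%N 1%N) (tp_entry_ge0 J_tp 1%N 1%N).
rewrite /Jmx /= [z 0%N * _]mulrC => det01 w0 w1 z0 z1.
by split; [split; [exact: Jmx_tp_vanish | do !split] | ].
Qed.
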